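(* Let $(\mathcal{T},q)$ be an interaction-free OMQ with $\mathcal{T}$ a DL-Lite$_\mathcal{R}$ TBox and $q$ a Boolean CQ, let $\mathcal{A}$ be an ABox consistent with $\mathcal{T}$, and let $x$ be a shared variable of $q$ (a variable occurring in at least two distinct atoms of $q$). Then for every homomorphism $h:q\to\mathcal{C}_{\mathcal{A},\mathcal{T}}$ we have $h(x)\in\mathrm{const}(\mathcal{A})$.
   Context: DL-Lite$_\mathcal{R}$ TBoxes contain inclusions $B\sqsubseteq C$, $R\sqsubseteq S$ with $B::=A\mid\exists R$, $C::=B\mid\neg B$, $R$ a role ($r$ or $r^-$), $S::=R\mid\neg R$. An ABox $\mathcal{A}$ is a finite set of assertions $A(c)$, $r(b,c)$; $\mathrm{const}(\mathcal{A})$ is its set of individuals. For a consistent KB $(\mathcal{A},\mathcal{T})$, the canonical model $\mathcal{C}_{\mathcal{A},\mathcal{T}}$ has domain all words $aR_1\cdots R_n$ ($n\ge0$, $a\in\mathrm{const}(\mathcal{A})$, $R_i$ roles) such that if $n\ge1$ then $(\mathcal{A},\mathcal{T})\models\exists R_1(a)$ and there is no $b\in\mathrm{const}(\mathcal{A})$ with $(\mathcal{A},\mathcal{T})\models R_1(a,b)$, and for $1\le i<n$, $\mathcal{T}\models\exists R_i^-\sqsubseteq\exists R_{i+1}$ and $R_i^-\neq R_{i+1}$; it interprets $a$ as $a$, $A$ as the individuals $a$ with $(\mathcal{A},\mathcal{T})\models A(a)$ plus words $aR_1\cdots R_n$ ($n\ge1$) with $\mathcal{T}\models\exists R_n^-\sqsubseteq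 A$, and $r$ as the pairs $(a,b)$ with $r(a,b)\in\mathcal{A}$, plus $(w,wR')$ with $\mathcal{T}\models R'\sqsubseteq r$, plus $(wR',w)$ with $\mathcal{T}\models R'\sqsubseteq r^-$. Elements outside $\mathrm{const}(\mathcal{A})$ are anonymous. Let $\circledast$ be a special symbol and $C^\circledast=C\cup\{\circledast\}$. For an atom $\alpha$ and $\mu:\mathrm{vars}(\alpha)\to\mathrm{const}(\mathcal{A})^\circledast$, write $(\mathcal{A},\mathcal{T})\models_\mu\alpha$ if there is a homomorphism $h:\alpha\to\mathcal{C}_{\mathcal{A},\mathcal{T}}$ with $h(x)=\mu(x)$ when $\mu(x)\in\mathrm{const}(\mathcal{A})$ and $h(x)$ anonymous when $\mu(x)=\circledast$. $(\mathcal{T},q)$ is interaction-free if for every assertion $f$, all atoms $\alpha,\beta$ of $q$ and all $\mu_\alpha:\mathrm{vars}(\alpha)\to\mathrm{const}(f)^\circledast$, $\mu_\beta:\mathrm{vars}(\beta)\to\mathrm{const}(f)^\circledast$, if $(\{f\},\mathcal{T})\models_{\mu_\alpha}\alpha$ and $(\{f\},\mathcal{T})\models_{\mu_\beta}\beta$ then $(\alpha,\mu_\alpha)=(\beta,\mu_\beta)$. Homomorphisms from $q$ map constants to themselves. *)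

From Stdlib Require Import List.
Import ListNotations.
Set Implicit Arguments.

Inductive role : Type := RN (r : nat) | RInv (r : nat).
Definition rinv (R : role) : role :=
  match R with RN r => RInv r | RInv r => RN r end.

Inductive basic : Type := BA (A : nat) | BEx (R : role).
Inductive gconcept : Type := CPos (B : basic) | CNeg (B : basic).
Inductive grole : Type := SPos (R : role) | SNeg (R : role).

Inductive axiom : Type :=
  | CI (B : basic) (C : gconcept)
  | RI (R : role) (Sg : grole).
Definition tbox := list axiom.

Inductive assertion : Type :=
  | AC (A : nat) (c : nat)
  | AR (r : nat) (b c : nat).
Definition abox := list assertion.

Definition assert_consts (f : assertion) : list nat :=
  match f with AC _ c => [c] | AR _ b c => [b; c] end.
Definition const_in (a : nat) (Ab : abox) : Prop :=
  exists f, In f Ab /\ In a (assert_consts f).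

Record interp (D : Type) := Interp {
  cI : nat -> D -> Prop;
  rI : nat -> D -> D -> Prop;
  iI : nat -> D }.

Definition role_int D (I : interp D) (R : role) (x y : D) : Prop :=
  match R with RN r => rI I r x y | RInv r => rI I r y x end.
Definition basic_int D (I : interp D) (B : basic) (x : D) : Prop :=
  match B with BA A => cI I A x | BEx R => exists y, role_int I R x y end.
Definition gconcept_int D (I : interp D) (C : gconcept) (x : D) : Prop :=
  match C with CPos B => basic_int I B x | CNeg B => ~ basic_int I B x end.
Definition grole_int D (I : interp D) (Sg : grole) (x y : D) : Prop :=
  match Sg with SPos R => role_int I R x y | SNeg R => ~ role_int I R x y end.

Definition sat_axiom D (I : interp D) (ax : axiom) : Prop :=
  match ax with
  | CI B C => forall x, basic_int I B x -> gconcept_int I C x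
  | RI R Sg => forall x y, role_int I R x y -> grole_int I Sg x y
  end.
Definition model_T D (I : interp D) (T : tbox) : Prop :=
  forall ax, In ax T -> sat_axiom I ax.
Definition sat_assertion D (I : interp D) (f : assertion) : Prop :=
  match f with
  | AC A c => cI I A (iI I c)
  | AR r b c => rI I r (iI I b) (iI I c)
  end.
Definition model_A D (I : interp D) (Ab : abox) : Prop :=
  forall f, In f Ab -> sat_assertion I f.

Definition consistent (Ab : abox) (T : tbox) : Prop :=
  exists (D : Type) (I : interp D), model_A I Ab /\ model_T I T.

Definition tbox_entails (T : tbox) (ax : axiom) : Prop :=
  forall (D : Type) (I : interp D), model_T I T -> sat_axiom I ax.
Definition kb_conc (Ab : abox) (T : tbox) (A : nat) (a : nat) : Prop :=
  forall (D : Type) (I : interp D), model_A I Ab -> model_T I T -> cI I A (iI I a).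
Definition kb_ex (Ab : abox) (T : tbox) (R : role) (a : nat) : Prop :=
  forall (D : Type) (I : interp D), model_A I Ab -> model_T I T ->
    exists y, role_int I R (iI I a) y.
Definition kb_role (Ab : abox) (T : tbox) (R : role) (a b : nat) : Prop :=
  forall (D : Type) (I : interp D), model_A I Ab -> model_T I T ->
    role_int I R (iI I a) (iI I b).

(* Canonical model C_{A,T}.  The word a R1 ... Rn is represented as (a, [R1;...;Rn]). *)
Definition elem : Type := (nat * list role)%type.

Fixpoint chain (T : tbox) (rs : list role) : Prop :=
  match rs with
  | R1 :: ((R2 :: _) as rest) =>
      tbox_entails T (CI (BEx (rinv R1)) (CPos (BEx R2))) /\ rinv R1 <> R2 /\ chain T rest
  | _ => True
  end.

Definition cm_dom (Ab : abox) (T : tbox) (e : elem) : Prop :=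
  const_in (fst e) Ab /\
  match snd e with
  | [] => True
  | R1 :: _ =>
      kb_ex Ab T R1 (fst e) /\
      (forall b, const_in b Ab -> ~ kb_role Ab T R1 (fst e) b) /\
      chain T (snd e)
  end.

Definition cm_conc (Ab : abox) (T : tbox) (A : nat) (e : elem) : Prop :=
  cm_dom Ab T e /\
  ((snd e = [] /\ kb_conc Ab T A (fst e)) \/
   (exists w R, snd e = w ++ [R] /\ tbox_entails T (CI (BEx (rinv R)) (CPos (BA A))))).

Definition cm_role (Ab : abox) (T : tbox) (r : nat) (e1 e2 : elem) : Prop :=
  cm_dom Ab T e1 /\ cm_dom Ab T e2 /\
  ((snd e1 = [] /\ snd e2 = [] /\ In (AR r (fst e1) (fst e2)) Ab) \/
   (exists R', fst e2 = fst e1 /\ snd e2 = snd e1 ++ [R'] /\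
               tbox_entails T (RI R' (SPos (RN r)))) \/
   (exists R', fst e1 = fst e2 /\ snd e1 = snd e2 ++ [R'] /\
               tbox_entails T (RI R' (SPos (RInv r))))).

Definition cm_named (Ab : abox) (e : elem) : Prop := snd e = [] /\ const_in (fst e) Ab.
Definition anonymous (e : elem) : Prop := snd e <> [].

Inductive term : Type := TVar (x : nat) | TConst (c : nat).
Inductive atom : Type :=
  | QA (A : nat) (t : term)
  | QR (r : nat) (t1 t2 : term).
Definition cq := list atom.   (* Boolean CQ: set (list) of atoms, all variables existential *)

Definition term_vars (t : term) : list nat :=
  match t with TVar x => [x] | TConst _ => [] end.
Definition atom_vars (a : atom) : list nat :=
  match a with QA _ t => term_vars t | QR _ t1 t2 => term_vars t1 ++ term_vars t2 end.

Definition eval_term (h : nat -> elem) (t : term) : elem :=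
  match t with TVar x => h x | TConst c => (c, []) end.
Definition cm_atom (Ab : abox) (T : tbox) (h : nat -> elem) (a : atom) : Prop :=
  match a with
  | QA A t => cm_conc Ab T A (eval_term h t)
  | QR r t1 t2 => cm_role Ab T r (eval_term h t1) (eval_term h t2)
  end.
Definition cm_hom (Ab : abox) (T : tbox) (q : cq) (h : nat -> elem) : Prop :=
  forall a, In a q -> cm_atom Ab T h a.

Definition shared_var (q : cq) (x : nat) : Prop :=
  exists a b, In a q /\ In b q /\ a <> b /\ In x (atom_vars a) /\ In x (atom_vars b).

(* μ : vars(α) -> const(f)^⊛, with None standing for ⊛ (values outside vars(α) irrelevant) *)
Definition mu_ok (f : assertion) (a : atom) (mu : nat -> option nat) : Prop :=
  forall x, In x (atom_vars a) ->
    match mu x with Some c => In c (assert_consts f) | None => True end.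

Definition sat_mu (Ab : abox) (T : tbox) (a : atom) (mu : nat -> option nat) : Prop :=
  exists h : nat -> elem, cm_atom Ab T h a /\
    forall x, In x (atom_vars a) ->
      match mu x with Some c => h x = (c, []) | None => anonymous (h x) end.

Definition interaction_free (T : tbox) (q : cq) : Prop :=
  forall (f : assertion) (a b : atom) (mua mub : nat -> option nat),
    In a q -> In b q -> mu_ok f a mua -> mu_ok f b mub ->
    sat_mu [f] T a mua -> sat_mu [f] T b mub ->
    a = b /\ (forall x, In x (atom_vars a) -> mua x = mub x).

From Stdlib Require Import List ClassicalEpsilon PeanoNat.
Import ListNotations.
Set Implicit Arguments.

(** If [h x = a R1 ... Rn] were anonymous, then [(A,T) |= exists R1(a)].  In DL-Lite_R this
    fact is already entailed by a single assertion [f] of [A] mentioning [a]: otherwise a model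
    of [(A,T)] can be modified by replacing [a] with a fresh copy that only carries what single
    assertions about [a] force, and this copy has no [R1]-successor.  All terms of an atom
    containing [x] are mapped into the subtree of [a] rooted at [a R1], so both atoms sharing
    [x] are satisfied in the canonical model of [({f},T)] under the same [mu], which
    interaction-freeness forbids for distinct atoms. *)

Definition role_entails (T : tbox) (S S' : role) : Prop := tbox_entails T (RI S (SPos S')).

Lemma role_entails_refl T S : role_entails T S S.
Proof. intros D I _ x y H; exact H. Qed.

Lemma role_entails_trans T S1 S2 S3 :
  role_entails T S1 S2 -> role_entails T S2 S3 -> role_entails T S1 S3.
Proof. intros H1 H2 D I HT x y H. exact (H2 D I HT _ _ (H1 D I HT _ _ H)). Qed.

Lemma role_int_rinv D (I : interp D) S x y : role_int I (rinv S) x y <-> role_int I S y x.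
Proof. destruct S; simpl; tauto. Qed.

Lemma role_entails_rinv T S S' : role_entails T S S' -> role_entails T (rinv S) (rinv S').
Proof.
  intros H D I HT x y Hxy. apply (proj2 (role_int_rinv I S' x y)).
  exact (H D I HT _ _ (proj1 (role_int_rinv I S x y) Hxy)).
Qed.

Lemma model_A_singleton D (I : interp D) Ab f : In f Ab -> model_A I Ab -> model_A I [f].
Proof. intros Hf HA g [<- | []]; exact (HA _ Hf). Qed.

Definition kb_basic (Ab : abox) (T : tbox) (B : basic) (a : nat) : Prop :=
  forall D (I : interp D), model_A I Ab -> model_T I T -> basic_int I B (iI I a).

Definition single_assertion_entails (Ab : abox) (T : tbox) (B : basic) (a : nat) : Prop :=
  exists f, In f Ab /\ In a (assert_consts f) /\ kb_basic [f] T B a.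

Lemma single_assertion_entails_CI {Ab T B B' a} :
  In (CI B (CPos B')) T -> single_assertion_entails Ab T B a ->
  single_assertion_entails Ab T B' a.
Proof.
  intros Hax [f [Hf [Ha Hk]]]. exists f; repeat split; auto.
  intros D I HA HT. exact (HT _ Hax _ (Hk D I HA HT)).
Qed.

Section Detach.

Variables (D : Type) (Ab : abox) (T : tbox) (I0 : interp D) (a : nat).

(* [None] is a fresh copy of [a]; [collapse] maps it back onto [a]. *)
Definition detach_ind (c : nat) : option D :=
  if Nat.eq_dec c a then None else Some (iI I0 c).

Definition collapse (u : option D) : D :=
  match u with Some y => y | None => iI I0 a end.

Lemma collapse_detach_ind c : collapse (detach_ind c) = iI I0 c.
Proof. unfold detach_ind; destruct (Nat.eq_dec c a); simpl; congruence. Qed.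

Lemma detach_ind_None c : detach_ind c = None -> c = a.
Proof. unfold detach_ind; destruct (Nat.eq_dec c a); congruence. Qed.

Lemma detach_ind_self : detach_ind a = None.
Proof. unfold detach_ind; destruct (Nat.eq_dec a a); congruence. Qed.

Lemma detach_ind_other c : c <> a -> detach_ind c = Some (iI I0 c).
Proof. unfold detach_ind; destruct (Nat.eq_dec c a); congruence. Qed.

Definition succ_witness (S : role) : D :=
  epsilon (inhabits (iI I0 a)) (fun y => role_int I0 S (iI I0 a) y).

(* The edges of the copy of [a]: its ABox edges, and one [S]-successor in [I0] for each
   [exists S] entailed by a single assertion about [a]. *)
Definition detached_edge (S : role) (u v : option D) : Prop :=
  u = None /\
  ((exists r b, In (AR r a b) Ab /\ S = RN r /\ v = detach_ind b) \/
   (exists r b, In (AR r b a) Ab /\ S = RInv r /\ v = detach_ind b) \/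
   (single_assertion_entails Ab T (BEx S) a /\ v = Some (succ_witness S))).

Definition detached_role (r : nat) (u v : option D) : Prop :=
  match u, v with
  | Some x, Some y => rI I0 r x y
  | _, _ => exists S, (detached_edge S u v /\ role_entails T S (RN r)) \/
                      (detached_edge S v u /\ role_entails T S (RInv r))
  end.

Definition detached_conc (A : nat) (u : option D) : Prop :=
  match u with
  | Some y => cI I0 A y
  | None => single_assertion_entails Ab T (BA A) a
  end.

Definition detached : interp (option D) :=
  @Interp (option D) detached_conc detached_role detach_ind.

Lemma detached_role_None S' u v :
  u = None \/ v = None ->
  (role_int detached S' u v <->
   exists S, (detached_edge S u v /\ role_entails T S S') \/
             (detached_edge S v u /\ role_entails T S (rinv S'))).
Proof.
  assert (Hname : forall r u v, u = None \/ v = None ->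
    (rI detached r u v <->
     exists S, (detached_edge S u v /\ role_entails T S (RN r)) \/
               (detached_edge S v u /\ role_entails T S (RInv r)))).
  { intros r u0 v0 [-> | ->]; simpl; [tauto | destruct u0; tauto]. }
  intros Hn. destruct S' as [r | r]; simpl.
  - exact (Hname r u v Hn).
  - rewrite (Hname r v u) by tauto.
    split; intros [S [H | H]]; exists S; tauto.
Qed.

Lemma detached_role_Some S x y : role_int detached S (Some x) (Some y) <-> role_int I0 S x y.
Proof. destruct S; simpl; tauto. Qed.

Lemma detached_basic_Some B y : basic_int I0 B y -> basic_int detached B (Some y).
Proof.
  destruct B as [A | S]; simpl; auto.
  intros [z Hz]. exists (Some z). apply detached_role_Some. exact Hz.
Qed.

Lemma detached_edge_local S v :
  detached_edge S None v ->
  exists f, In f Ab /\ In a (assert_consts f) /\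
    forall D' (I : interp D'), model_A I [f] -> model_T I T ->
      exists y, role_int I S (iI I a) y /\ (v = None -> y = iI I a).
Proof.
  intros [_ [[r [b [Hin [-> ->]]]] | [[r [b [Hin [-> ->]]]] | [[f [Hf [Ha Hk]]] ->]]]].
  - exists (AR r a b); repeat split; [exact Hin | simpl; auto |].
    intros D' I HA _. exists (iI I b). split; [exact (HA _ (or_introl eq_refl)) |].
    intros E. rewrite (detach_ind_None _ E). reflexivity.
  - exists (AR r b a); repeat split; [exact Hin | simpl; auto |].
    intros D' I HA _. exists (iI I b). split; [exact (HA _ (or_introl eq_refl)) |].
    intros E. rewrite (detach_ind_None _ E). reflexivity.
  - exists f; repeat split; auto.
    intros D' I HA HT. destruct (Hk D' I HA HT) as [y Hy].
    exists y; split; [exact Hy | discriminate].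
Qed.

Lemma detached_basic_None B :
  basic_int detached B None -> single_assertion_entails Ab T B a.
Proof.
  destruct B as [A | S']; simpl; [tauto |].
  intros [v Hv]. apply detached_role_None in Hv; [| tauto].
  destruct Hv as [S [[He Hent] | [He Hent]]].
  - destruct (detached_edge_local He) as [f [Hf [Ha Hk]]].
    exists f; repeat split; auto. intros D' I HA HT.
    destruct (Hk D' I HA HT) as [y [Hy _]]. exists y. exact (Hent _ _ HT _ _ Hy).
  - assert (v = None) as -> by apply He.
    destruct (detached_edge_local He) as [f [Hf [Ha Hk]]].
    exists f; repeat split; auto. intros D' I HA HT.
    destruct (Hk D' I HA HT) as [y [Hy Hya]]. rewrite Hya in Hy by reflexivity.
    exists (iI I a). apply role_int_rinv. exact (Hent _ _ HT _ _ Hy).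
Qed.

Hypotheses (HA : model_A I0 Ab) (HT : model_T I0 T).

Lemma collapse_detached_edge S u v :
  detached_edge S u v -> role_int I0 S (collapse u) (collapse v).
Proof.
  intros [-> [[r [b [Hin [-> ->]]]] | [[r [b [Hin [-> ->]]]] | [[f [Hf [_ Hk]]] ->]]]];
    simpl; try rewrite collapse_detach_ind.
  - exact (HA _ Hin).
  - exact (HA _ Hin).
  - unfold succ_witness. apply epsilon_spec. exact (Hk _ _ (model_A_singleton Hf HA) HT).
Qed.

Lemma collapse_role {S u v} :
  role_int detached S u v -> role_int I0 S (collapse u) (collapse v).
Proof.
  intros H. destruct (classic (u = None \/ v = None)) as [Hn | Hn].
  - apply detached_role_None in H; [| exact Hn].
    destruct H as [S0 [[He Hent] | [He Hent]]].
    + exact (Hent _ _ HT _ _ (collapse_detached_edge He)).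
    + apply role_int_rinv. exact (Hent _ _ HT _ _ (collapse_detached_edge He)).
  - destruct u as [x |]; [| tauto]. destruct v as [y |]; [| tauto].
    exact (proj1 (detached_role_Some S x y) H).
Qed.

Lemma collapse_basic {B u} : basic_int detached B u -> basic_int I0 B (collapse u).
Proof.
  destruct B as [A | S]; simpl.
  - destruct u as [y |]; simpl; [tauto |].
    intros [f [Hf [_ Hk]]]. exact (Hk _ _ (model_A_singleton Hf HA) HT).
  - intros [v Hv]. exists (collapse v). exact (collapse_role Hv).
Qed.

(* Positive inclusions hold at [None] because single-assertion entailment is closed under
   them; negative ones are reflected back into [I0] along [collapse]. *)
Lemma detached_sat_CI {B C} : In (CI B C) T -> sat_axiom detached (CI B C).
Proof.
  intros Hax u Hu. destruct C as [B' | B']; simpl.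
  - destruct u as [y |].
    + apply detached_basic_Some. exact (HT _ Hax _ (collapse_basic Hu)).
    + apply detached_basic_None in Hu.
      pose proof (single_assertion_entails_CI Hax Hu) as HB'.
      destruct B' as [A | S]; [exact HB' |].
      exists (Some (succ_witness S)). apply detached_role_None; [tauto |].
      exists S. left. split; [| apply role_entails_refl].
      split; [reflexivity | right; right; auto].
  - intros HB'. exact (HT _ Hax _ (collapse_basic Hu) (collapse_basic HB')).
Qed.

Lemma detached_sat_RI {R Sg} : In (RI R Sg) T -> sat_axiom detached (RI R Sg).
Proof.
  intros Hax u v Huv. destruct Sg as [S' | S']; simpl.
  - assert (Hent : role_entails T R S') by (intros D' I HT'; exact (HT' _ Hax)).
    destruct (classic (u = None \/ v = None)) as [Hn | Hn].
    + apply detached_role_None in Huv; [| exact Hn]. apply detached_role_None; [exact Hn |].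
      destruct Huv as [S0 [[He H0] | [He H0]]]; exists S0; [left | right]; split; auto.
      * exact (role_entails_trans H0 Hent).
      * exact (role_entails_trans H0 (role_entails_rinv Hent)).
    + destruct u as [x |]; [| tauto]. destruct v as [y |]; [| tauto].
      apply detached_role_Some. apply detached_role_Some in Huv. exact (HT _ Hax _ _ Huv).
  - intros H. exact (HT _ Hax _ _ (collapse_role Huv) (collapse_role H)).
Qed.

Lemma detached_model_T : model_T detached T.
Proof.
  intros [B C | R Sg] Hax; [exact (detached_sat_CI Hax) | exact (detached_sat_RI Hax)].
Qed.

Lemma detached_model_A : model_A detached Ab.
Proof.
  intros [A c | r b c] Hf; simpl.
  - destruct (Nat.eq_dec c a) as [-> | Hc].
    + rewrite detach_ind_self. exists (AC A a); repeat split; [exact Hf | simpl; auto |].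
      intros D' I HA' _. exact (HA' _ (or_introl eq_refl)).
    + rewrite (detach_ind_other Hc). exact (HA _ Hf).
  - destruct (Nat.eq_dec b a) as [-> | Hb]; [| destruct (Nat.eq_dec c a) as [-> | Hc]].
    + rewrite detach_ind_self; simpl. exists (RN r). left. split; [| apply role_entails_refl].
      split; [reflexivity | left; exists r, c; auto].
    + rewrite detach_ind_self, (detach_ind_other Hb); simpl. exists (RInv r). right.
      split; [| apply role_entails_refl].
      split; [reflexivity | right; left; exists r, b; rewrite (detach_ind_other Hb); auto].
    + rewrite (detach_ind_other Hb), (detach_ind_other Hc). exact (HA _ Hf).
Qed.

Lemma single_assertion_entails_of_model B :
  kb_basic Ab T B a -> single_assertion_entails Ab T B a.
Proof.
  intros Hk. apply detached_basic_None.
  rewrite <- detach_ind_self. exact (Hk _ detached detached_model_A detached_model_T).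
Qed.

End Detach.

Lemma kb_basic_local Ab T B a :
  consistent Ab T -> kb_basic Ab T B a -> single_assertion_entails Ab T B a.
Proof. intros [D [I0 [HA HT]]]. apply (single_assertion_entails_of_model HA HT). Qed.

Definition in_subtree (a : nat) (R1 : role) (e : elem) : Prop :=
  fst e = a /\ forall R w, snd e = R :: w -> R = R1.

Lemma cm_dom_single {Ab T f a R1 e} :
  In f Ab -> In a (assert_consts f) -> kb_ex [f] T R1 a ->
  cm_dom Ab T e -> in_subtree a R1 e -> cm_dom [f] T e.
Proof.
  intros Hf Ha Hk [_ Hw] [Hfst Hhead]. destruct e as [c [| R w]]; simpl in *; subst c.
  - split; [exists f; simpl; auto | exact I].
  - rewrite (Hhead R w eq_refl) in Hw |- *. destruct Hw as [_ [Hnone Hchain]].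
    split; [exists f; simpl; auto |]. split; [exact Hk | split; [| exact Hchain]].
    intros b [g [[<- | []] Hb]] Hr. apply (Hnone b); [exists f; auto |].
    intros D I HA HT. exact (Hr D I (model_A_singleton Hf HA) HT).
Qed.

Lemma cm_conc_anonymous {Ab Ab' T A e} :
  cm_conc Ab T A e -> anonymous e -> cm_dom Ab' T e -> cm_conc Ab' T A e.
Proof. intros [_ [[Hnamed _] | Hw]] Hanon Hd; [contradiction | split; auto]. Qed.

Lemma cm_role_anonymous {Ab Ab' T r e1 e2} :
  cm_role Ab T r e1 e2 -> anonymous e1 \/ anonymous e2 ->
  cm_dom Ab' T e1 -> cm_dom Ab' T e2 -> cm_role Ab' T r e1 e2.
Proof.
  intros [_ [_ [[H1 [H2 _]] | Hedge]]] Hanon D1 D2.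
  - destruct Hanon; contradiction.
  - split; [exact D1 | split; [exact D2 | right; exact Hedge]].
Qed.

Lemma in_subtree_snoc a R1 a1 w1 R' :
  (w1 <> [] /\ in_subtree a R1 (a1, w1)) \/ in_subtree a R1 (a1, w1 ++ [R']) ->
  in_subtree a R1 (a1, w1) /\ in_subtree a R1 (a1, w1 ++ [R']).
Proof.
  unfold in_subtree; simpl.
  destruct w1 as [| R0 w1]; intros [[Hne [-> Hh]] | [-> Hh]]; try congruence;
    repeat split; intros R w E;
    first [discriminate | injection E as <- _; eapply Hh; reflexivity].
Qed.

Lemma cm_role_subtree {Ab T r e1 e2 e a R1} :
  cm_role Ab T r e1 e2 -> e = e1 \/ e = e2 -> anonymous e -> in_subtree a R1 e ->
  in_subtree a R1 e1 /\ in_subtree a R1 e2.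
Proof.
  intros [_ [_ Hcase]] He Hanon Hsub.
  destruct e1 as [a1 w1], e2 as [a2 w2]; simpl in Hcase.
  destruct Hcase as [[-> [-> _]] | [[R' [-> [-> _]]] | [R' [-> [-> _]]]]].
  - destruct He as [-> | ->]; contradiction.
  - apply in_subtree_snoc. destruct He as [-> | ->]; [left | right]; auto.
  - apply and_comm, in_subtree_snoc. destruct He as [-> | ->]; [right | left]; auto.
Qed.

Definition atom_terms (al : atom) : list term :=
  match al with QA _ t => [t] | QR _ t1 t2 => [t1; t2] end.

Lemma in_atom_vars_terms {al y} : In y (atom_vars al) -> In (TVar y) (atom_terms al).
Proof.
  destruct al as [A [z | c] | r [z1 | c1] [z2 | c2]]; simpl; intuition congruence.
Qed.

Lemma cm_atom_dom {Ab T h al t} :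
  cm_atom Ab T h al -> In t (atom_terms al) -> cm_dom Ab T (eval_term h t).
Proof.
  destruct al as [A t1 | r t1 t2]; simpl; intros Hc Ht.
  - destruct Ht as [<- | []]. exact (proj1 Hc).
  - destruct Hc as [D1 [D2 _]]. destruct Ht as [<- | [<- | []]]; assumption.
Qed.

Lemma cm_atom_subtree {Ab T h al x a R1 w t} :
  cm_atom Ab T h al -> In x (atom_vars al) -> h x = (a, R1 :: w) ->
  In t (atom_terms al) -> in_subtree a R1 (eval_term h t).
Proof.
  intros Hc Hx Hhx. apply in_atom_vars_terms in Hx.
  assert (Hanon : anonymous (h x)) by (rewrite Hhx; discriminate).
  assert (Hsub : in_subtree a R1 (h x)).
  { rewrite Hhx. split; [reflexivity | simpl; intros R w' E; injection E; auto]. }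
  destruct al as [A t1 | r t1 t2]; simpl in *.
  - destruct Hx as [-> | []]. intros [<- | []]. exact Hsub.
  - assert (He : h x = eval_term h t1 \/ h x = eval_term h t2)
      by (destruct Hx as [-> | [-> | []]]; auto).
    destruct (cm_role_subtree Hc He Hanon Hsub) as [Hsub1 Hsub2].
    intros [<- | [<- | []]]; assumption.
Qed.

Lemma cm_atom_single {Ab T h al x a R1 w f} :
  cm_atom Ab T h al -> In x (atom_vars al) -> h x = (a, R1 :: w) ->
  In f Ab -> In a (assert_consts f) -> kb_ex [f] T R1 a -> cm_atom [f] T h al.
Proof.
  intros Hc Hx Hhx Hf Ha Hk.
  assert (Hdom : forall t, In t (atom_terms al) -> cm_dom [f] T (eval_term h t)).
  { intros t Ht. apply (cm_dom_single Hf Ha Hk).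
    - exact (cm_atom_dom Hc Ht).
    - exact (cm_atom_subtree Hc Hx Hhx Ht). }
  assert (Hanon : anonymous (h x)) by (rewrite Hhx; discriminate).
  apply in_atom_vars_terms in Hx.
  destruct al as [A t | r t1 t2]; simpl in *.
  - destruct Hx as [-> | []]. exact (cm_conc_anonymous Hc Hanon (Hdom _ (or_introl eq_refl))).
  - apply (cm_role_anonymous Hc); auto.
    destruct Hx as [-> | [-> | []]]; auto.
Qed.

Definition hom_mu (h : nat -> elem) (y : nat) : option nat :=
  match snd (h y) with [] => Some (fst (h y)) | _ => None end.

Lemma sat_mu_hom_mu {Ab T h al} : cm_atom Ab T h al -> sat_mu Ab T al (hom_mu h).
Proof.
  intros Hc. exists h. split; [exact Hc |].
  intros y _. unfold hom_mu, anonymous. destruct (h y) as [c [| R w]]; simpl; congruence.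
Qed.

Lemma mu_ok_hom_mu {f h al a} :
  In a (assert_consts f) -> (forall y, In y (atom_vars al) -> fst (h y) = a) ->
  mu_ok f al (hom_mu h).
Proof.
  intros Ha Hfst y Hy. unfold hom_mu.
  destruct (snd (h y)); [rewrite (Hfst y Hy); exact Ha | exact I].
Qed.

Lemma sat_mu_single {Ab T h al x a R1 w f} :
  cm_atom Ab T h al -> In x (atom_vars al) -> h x = (a, R1 :: w) ->
  In f Ab -> In a (assert_consts f) -> kb_ex [f] T R1 a ->
  mu_ok f al (hom_mu h) /\ sat_mu [f] T al (hom_mu h).
Proof.
  intros Hc Hx Hhx Hf Ha Hk. split.
  - apply (mu_ok_hom_mu Ha). intros y Hy.
    exact (proj1 (cm_atom_subtree Hc Hx Hhx (in_atom_vars_terms Hy))).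
  - exact (sat_mu_hom_mu (cm_atom_single Hc Hx Hhx Hf Ha Hk)).
Qed.

Theorem lemma9 (T : tbox) (q : cq) (Ab : abox) :
  interaction_free T q -> consistent Ab T ->
  forall x : nat, shared_var q x ->
  forall h : nat -> elem, cm_hom Ab T q h -> cm_named Ab (h x).
Proof.
  intros Hif Hcons x [al [be [Hal [Hbe [Hne [Hxa Hxb]]]]]] h Hh.
  pose proof (cm_atom_dom (Hh al Hal) (in_atom_vars_terms Hxa)) as Hdom.
  simpl in Hdom. destruct (h x) as [a [| R1 w]] eqn:Hhx; destruct Hdom as [Hconst Hw].
  - split; [reflexivity | exact Hconst].
  - destruct (kb_basic_local Hcons (B := BEx R1) (proj1 Hw)) as [f [Hf [Ha Hk]]].
    destruct (sat_mu_single (Hh al Hal) Hxa Hhx Hf Ha Hk) as [Oa Sa].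
    destruct (sat_mu_single (Hh be Hbe) Hxb Hhx Hf Ha Hk) as [Ob Sb].
    destruct (Hif f al be (hom_mu h) (hom_mu h) Hal Hbe Oa Ob Sa Sb) as [Heq _].
    contradiction.
Qed.
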